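(* Let $m,n\in\mathbf{N}$ and let $\nu$ be a partition of $n-1$ with at most $m$ parts. Then there is a unique set family of shape $(m^n)$ and type $(m^n)\star\nu$.
   Context: A set family of shape $(m^n)$ is a collection of $n$ distinct $m$-subsets of $\mathbf{N}$; it has type $\lambda$ (largest part $a$, conjugate $\lambda'$) if for each $i\in\{1,\dots,a\}$ exactly $\lambda'_i$ of its sets contain $i$. For a partition $\nu$ of $n-1$ with $k\le m$ parts, $(m^n)\star\nu$ is the partition obtained from the Young diagram of $(m^n)$ by, for each $i$ with $1\le i\le k$, deleting $\nu_i$ boxes (from the bottom) of column $m+1-i$ and adding $\nu_i$ boxes to the end of row $i$. *)

From HB Require Import structures.
From mathcomp Require Import all_boot.
From mathcomp Require Import finmap.
Set Implicit Arguments. Unset Strict Implicit. Unset Printing Implicit Defensive.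


Definition is_partition_of (k : nat) (nu : seq nat) : bool :=
  [&& sorted geq nu, all (fun x => 0 < x) nu & sumn nu == k].

Definition largest_part (la : seq nat) : nat := \max_(x <- la) x.
(* conjugate part lambda'_i (1-indexed): number of parts >= i *)
Definition conj_part (la : seq nat) (i : nat) : nat := count (fun x => i <= x) la.

(* ---------- Young diagrams as lists of cells (row, column), 0-indexed ----- *)
Definition cells := seq (nat * nat).

Definition rect_diagram (m n : nat) : cells :=
  [seq (r, c) | r <- iota 0 n, c <- iota 0 m].

Definition del_col_bottom (D : cells) (c k : nat) : cells :=
  let rows := sort geq [seq p.1 | p <- D & p.2 == c] in
  let gone := take k rows in
  [seq p <- D | ~~ ((p.2 == c) && (p.1 \in gone))].

Definition row_len (D : cells) (r : nat) : nat := count (fun p => p.1 == r) D.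

Definition add_row_end (D : cells) (r k : nat) : cells :=
  D ++ [seq (r, row_len D r + t) | t <- iota 0 k].

(* (m^n) * nu as a diagram: for i = 1..k (here 0-indexed i = 0..k-1),
   delete nu_i boxes from the bottom of column m+1-i (0-indexed: m-1-i)
   and add nu_i boxes to the end of row i *)
Definition star_diagram (m n : nat) (nu : seq nat) : cells :=
  foldl (fun D i => add_row_end (del_col_bottom D (m - 1 - i) (nth 0 nu i))
                                i (nth 0 nu i))
        (rect_diagram m n) (iota 0 (size nu)).

(* the resulting partition, read off as row lengths (all boxes lie in rows < n) *)
Definition star (m n : nat) (nu : seq nat) : seq nat :=
  [seq row_len (star_diagram m n nu) r | r <- iota 0 n].

Definition family_of_shape (m n : nat) (F : {fset {fset nat}}) : Prop :=
  (#|` F| = n)%fset /\ forall A, A \in F -> (#|` A| = m)%fset.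

Definition has_type (F : {fset {fset nat}}) (la : seq nat) : Prop :=
  forall i, 1 <= i <= largest_part la ->
    (#|` [fset A in F | i \in A]|)%fset = conj_part la i.

From HB Require Import structures.
From mathcomp Require Import all_boot finmap zify.
Set Implicit Arguments. Unset Strict Implicit. Unset Printing Implicit Defensive.

(* The type (m^n) * nu has conjugate parts n - nu_(m+1-i) for i <= m and
   nu'_t at i = m + t, so it is the type of the family consisting of {1..m}
   and, for each cell (j, t) of the Ferrers diagram of nu, the set {1..m} with
   m + 1 - j exchanged for m + t.  Conversely, in a family F of this type the
   elements 1, ..., m + nu_1 occur m n times in total, which is the total size
   of F, so every set of F lies in {1..m + nu_1}.  The elements above m occur
   n - 1 times and only {1..m} avoids them all, so each other set contains
   exactly one of them and is an exchange set.  The cells (j, t) of these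
   exchange sets have row counts nu_j and column counts nu'_t, so they form the
   Ferrers diagram of nu. *)

(** * Counting in sequences *)

Lemma count_sum (T : Type) (P : pred T) (s : seq T) : count P s = \sum_(x <- s) P x.
Proof. by rewrite -sumn_count sumnE big_map. Qed.

Lemma count_eq_size (T : eqType) (s t : seq T) (P : pred T) :
  uniq s -> uniq t -> (forall x, (x \in s) && P x = (x \in t)) -> count P s = size t.
Proof.
move=> us ut st; rewrite -size_filter; apply/perm_size/uniq_perm => //.
- exact: filter_uniq.
- by move=> x; rewrite mem_filter andbC st.
Qed.

Lemma uniq_count_le1_eq (T : eqType) (P : pred T) (s : seq T) x y :
  uniq s -> count P s <= 1 -> x \in s -> y \in s -> P x -> P y -> x = y.
Proof.
move=> us cs xs ys Px Py; apply/eqP; apply: contraTT cs => nxy.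
rewrite -ltnNge -size_filter (@uniq_leq_size _ [:: x; y]) //= ?inE ?nxy //.
by move=> z; rewrite !inE => /orP [] /eqP ->; rewrite mem_filter ?Px ?Py.
Qed.

Lemma count_split (T : Type) (b a : pred T) (s : seq T) :
  count a s = count (fun x => b x && a x) s + count (fun x => ~~ b x && a x) s.
Proof. by elim: s => //= x s ->; case: (b x); case: (a x) => /=; lia. Qed.

Lemma sum_count_exchange (S T : Type) (r : S -> T -> bool) (s : seq S) (t : seq T) :
  \sum_(a <- s) count (r a) t = \sum_(x <- t) count (r^~ x) s.
Proof.
under eq_bigr do rewrite count_sum.
by rewrite exchange_big; apply: eq_bigr => x _; rewrite count_sum.
Qed.

Lemma leq_sum_eq (T : eqType) (f g : T -> nat) (s : seq T) :
  (forall x, x \in s -> f x <= g x) -> \sum_(x <- s) f x = \sum_(x <- s) g x ->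
  forall x, x \in s -> f x = g x.
Proof.
elim: s => // a s IH fg; rewrite !big_cons => sfg x.
have fg_s y : y \in s -> f y <= g y by move=> ys; apply: fg; rewrite inE ys orbT.
have le_s : \sum_(y <- s) f y <= \sum_(y <- s) g y.
  by rewrite big_seq [X in _ <= X]big_seq; apply: leq_sum.
have := fg a (mem_head _ _); rewrite inE => fga /orP [/eqP -> | xs]; first lia.
by apply: IH => //; lia.
Qed.

Lemma count_ltn_iota q n : q <= n -> count (fun r => r < q) (iota 0 n) = q.
Proof.
move=> qn; rewrite -(subnKC qn) iotaD count_cat.
rewrite (@eq_in_count _ _ predT (iota 0 q)) => [|r]; last by rewrite mem_iota.
rewrite count_predT size_iota -[RHS]addn0; congr (_ + _).
by apply/eqP; rewrite -leqn0 leqNgt -has_count; apply/hasP => -[j]; rewrite mem_iota; lia.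
Qed.

Lemma count_nth_iota (s : seq nat) (Q : pred nat) m : size s <= m ->
  count (fun j => (j < size s) && Q (nth 0 s j)) (iota 0 m) = count Q s.
Proof.
move=> sm; rewrite -(subnKC sm) iotaD count_cat -[RHS]addn0; congr (_ + _); last first.
  by apply/eqP; rewrite -leqn0 leqNgt -has_count; apply/hasP => -[j]; rewrite mem_iota; lia.
rewrite -[in RHS](mkseq_nth 0 s) /mkseq count_map.
by apply: eq_in_count => j; rewrite mem_iota /= => ->.
Qed.

Lemma sum_nth_iota (s : seq nat) m : size s <= m -> \sum_(j <- iota 0 m) nth 0 s j = sumn s.
Proof.
move=> sm; rewrite -(subnKC sm) iotaD big_cat -[RHS]addn0; congr (_ + _).
  by rewrite -[in RHS](mkseq_nth 0 s) /mkseq sumnE big_map.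
by rewrite big_seq big1 // => j; rewrite mem_iota => jm; rewrite nth_default //; lia.
Qed.

Lemma count_allpairs (S T : Type) (s : seq S) (t : S -> seq T) (Q : pred (S * T)) :
  count Q [seq (x, y) | x <- s, y <- t x] = \sum_(x <- s) count (fun y => Q (x, y)) (t x).
Proof.
by elim: s => [|x s IH]; rewrite ?big_nil ?big_cons // allpairs_cons count_cat count_map IH.
Qed.

Lemma mem_map_pair (T : eqType) (i r : T) (c : nat) (s : seq nat) :
  ((r, c) \in [seq (i, x) | x <- s]) = (r == i) && (c \in s).
Proof. by apply/mapP/andP => [[x xs [-> ->]] | [/eqP -> cs]]; [rewrite eqxx | exists c]. Qed.

Lemma uniq_iota_pairs m k : uniq [seq (j, t) | j <- iota 0 m, t <- iota 0 k].
Proof. by apply: allpairs_uniq; rewrite ?iota_uniq // => -[a b] [c d] _ _ /= [-> ->]. Qed.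

Lemma mem_iota_pairs m k j t :
  ((j, t) \in [seq (j, t) | j <- iota 0 m, t <- iota 0 k]) = (j < m) && (t < k).
Proof.
apply/allpairsP/andP => [[[a b] /=] | [j_lt t_lt]]; last by exists (j, t); rewrite !mem_iota.
by rewrite !mem_iota => -[a_lt b_lt [-> ->]].
Qed.

Lemma rev_iota0 m : rev (iota 0 m) = [seq m - 1 - c | c <- iota 0 m].
Proof.
apply: (@eq_from_nth _ 0); first by rewrite size_rev size_map.
move=> i; rewrite size_rev size_iota => im.
rewrite nth_rev ?size_iota // (nth_map 0) ?size_iota // !nth_iota //; lia.
Qed.

(** * Partitions and Ferrers diagrams *)

Lemma geq_trans : transitive geq.
Proof. by move=> y x z /= yx zy; apply: leq_trans zy yx. Qed.

Lemma geq_total : total geq.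
Proof. by move=> a b; apply: leq_total. Qed.

Lemma geq_anti : antisymmetric geq.
Proof. by move=> a b /andP [ab ba]; apply/eqP; rewrite eqn_leq; apply/andP. Qed.

Lemma sort_geq_iota (X : seq nat) n : uniq X -> X =i iota 0 n -> sort geq X = rev (iota 0 n).
Proof.
move=> uX EX; rewrite (perm_sortP geq_total geq_trans geq_anti X (rev (iota 0 n)) _).
  by rewrite sorted_sort ?rev_sorted ?iota_sorted //; apply: geq_trans.
apply: uniq_perm => //; first by rewrite rev_uniq iota_uniq.
by move=> x; rewrite mem_rev EX.
Qed.

Section Partitions.

Variable nu : seq nat.
Hypothesis nu_sorted : sorted geq nu.

Lemma nth_partition_homo i j : i <= j -> nth 0 nu j <= nth 0 nu i.
Proof.
move=> ij; case: (ltnP j (size nu)) => jn; last by rewrite nth_default.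
by apply: (sorted_leq_nth geq_trans (@leqnn)) => //; rewrite inE; lia.
Qed.

Lemma partition_part_le_head x : x \in nu -> x <= nth 0 nu 0.
Proof.
by move=> /(nthP 0) [j _ <-]; apply: nth_partition_homo.
Qed.

Lemma sum_conj_part : \sum_(t <- iota 0 (nth 0 nu 0)) conj_part nu t.+1 = sumn nu.
Proof.
rewrite /conj_part; under eq_bigr do rewrite count_sum.
rewrite exchange_big sumnE; apply: eq_big_seq => x xs /=.
by rewrite -count_sum count_ltn_iota // partition_part_le_head.
Qed.

End Partitions.

Lemma partition_head_size n nu : 0 < n -> is_partition_of n.-1 nu ->
  nth 0 nu 0 + size nu <= n.
Proof.
move=> n_gt0 /and3P [_ pos /eqP sum_nu]; case: nu pos sum_nu => [|x s] /=; first lia.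
have size_le_sum (r : seq nat) : all (fun y => 0 < y) r -> size r <= sumn r.
  by elim: r => //= y r IH /andP [y_gt0 /IH]; lia.
by move=> /andP [x_gt0 /size_le_sum]; lia.
Qed.

Lemma sorted_count_leq (s : seq nat) (P : pred nat) : sorted geq s ->
  (forall x y, x <= y -> P x -> P y) -> ~~ P 0 ->
  forall q, (count P s <= q) = ~~ P (nth 0 s q).
Proof.
move=> + P_homo nP0; elim: s => [|x s IH] s_sorted q; first by rewrite nth_nil nP0.
have head_ge j : nth 0 s j <= x := nth_partition_homo s_sorted (leq0n j.+1).
have count0 : ~~ P x -> count P s = 0.
  move=> nPx; apply/eqP; rewrite -leqn0 leqNgt -has_count; apply/hasP => -[y ys Py].
  move: ys => /(nthP 0) [j _ Ej]; move: Py; rewrite -Ej => /(P_homo _ _ (head_ge j)).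
  by rewrite (negbTE nPx).
have {}IH := IH (path_sorted s_sorted).
case: q => [|q] /=; case Px: (P x) => /=.
- by rewrite add1n.
- by rewrite count0 ?Px.
- by rewrite add1n ltnS IH.
- rewrite count0 ?Px //; apply/esym/negP => /(P_homo _ _ (head_ge q)).
  by rewrite Px.
Qed.

(* The columns allow no cell of row [0] beyond [x], and row [0] has [x] cells. *)
Lemma ferrers_first_row x (nu : seq nat) (P : seq (nat * nat)) :
  sorted geq (x :: nu) -> uniq P -> count (fun p => p.1 == 0) P = x ->
  (forall t, count (fun p => p.2 == t) P = conj_part (x :: nu) t.+1) ->
  forall t, ((0, t) \in P) = (t < x).
Proof.
move=> nu_sorted uP row0 cols.
have head_ge y : y \in nu -> y <= x.
  by move=> ynu; apply: (partition_part_le_head nu_sorted); rewrite inE ynu orbT.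
have col_lt p : p \in P -> p.2 < x.
  move=> pP; rewrite ltnNge; apply/negP => xp.
  have : 0 < count (fun q => q.2 == p.2) P by rewrite -has_count; apply/hasP; exists p.
  rewrite cols /conj_part /=; have -> : (p.2 < x) = false by rewrite ltnNge xp.
  rewrite add0n -has_count => /hasP [y ynu lt].
  by have := leq_ltn_trans xp lt; rewrite ltnNge head_ge.
move=> t; apply/idP/idP => [/col_lt // | t_lt].
pose R0 := [seq p.2 | p <- P & p.1 == 0].
have uR : uniq R0.
  rewrite map_inj_in_uniq ?filter_uniq // => u v; rewrite !mem_filter.
  by case: u v => [p1 p2] [q1 q2] /= /andP [/eqP -> _] /andP [/eqP -> _] ->.
have sub : {subset R0 <= iota 0 x}.
  by move=> y /mapP [q]; rewrite mem_filter => /andP [_ /col_lt] + ->; rewrite mem_iota.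
have size_R0 : size (iota 0 x) <= size R0 by rewrite size_map size_filter row0 size_iota.
have [_ E] := uniq_min_size uR sub size_R0.
have : t \in R0 by rewrite E mem_iota.
by case/mapP => -[p1 p2]; rewrite mem_filter /= => /andP [/eqP -> H] ->.
Qed.

Lemma ferrers_unique (nu : seq nat) (P : seq (nat * nat)) : sorted geq nu -> uniq P ->
  (forall j, count (fun p => p.1 == j) P = nth 0 nu j) ->
  (forall t, count (fun p => p.2 == t) P = conj_part nu t.+1) ->
  forall j t, ((j, t) \in P) = (t < nth 0 nu j).
Proof.
elim: nu P => [|x nu IH] P nu_sorted uP rows cols.
  case: P uP rows cols => [|p P] //= uP rows cols j t; first by rewrite nth_nil.
  by have := rows p.1; rewrite eqxx nth_nil.
have row0 := ferrers_first_row nu_sorted uP (rows 0) cols.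
pose P' := [seq (p.1.-1, p.2) | p <- P & p.1 != 0].
have uP' : uniq P'.
  rewrite map_inj_in_uniq ?filter_uniq // => u v; rewrite !mem_filter.
  case: u v => [p1 p2] [q1 q2] /= /andP [p0 _] /andP [q0 _] [] e ->.
  by congr (_, _); lia.
have memP' j t : ((j, t) \in P') = ((j.+1, t) \in P).
  apply/idP/idP => [|h]; last by apply/mapP; exists (j.+1, t); rewrite // mem_filter h.
  by case/mapP => -[p1 p2]; rewrite mem_filter /= => /andP [p0 pP] [-> ->]; rewrite prednK ?lt0n.
have rows' j : count (fun p => p.1 == j) P' = nth 0 nu j.
  rewrite count_map count_filter -[RHS]/(nth 0 (x :: nu) j.+1) -rows.
  by apply: eq_count => -[p1 p2] /=; apply/idP/idP; lia.
have cols' t : count (fun p => p.2 == t) P' = conj_part nu t.+1.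
  rewrite count_map count_filter.
  have := cols t; rewrite /conj_part (count_split (fun p => p.1 == 0)) /=.
  have -> : count (fun p => (p.1 == 0) && (p.2 == t)) P = (t < x).
    rewrite -row0 -(count_uniq_mem _ uP); apply: eq_count => -[p1 p2] /=.
    by rewrite xpair_eqE.
  move/eqP; rewrite eqn_add2l => /eqP <-.
  by apply: eq_count => -[p1 p2] /=; rewrite andbC.
have IH' := IH P' (path_sorted nu_sorted) uP' rows' cols'.
by case=> [|j] t; rewrite ?row0 //= -memP' IH'.
Qed.

(** * The diagram (m^n) * nu *)

Definition star_stage (m n : nat) (nu : seq nat) (i : nat) : cells :=
  foldl (fun D i => add_row_end (del_col_bottom D (m - 1 - i) (nth 0 nu i)) i (nth 0 nu i))
        (rect_diagram m n) (iota 0 i).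

(* After [i] steps, column [c < m] has lost its bottom [nu_(m-1-c)] cells if its
   step [m-1-c] is done, and each row [r < i] has gained [nu_r] cells. *)
Definition star_cell (m n : nat) (nu : seq nat) (i : nat) (p : nat * nat) : bool :=
  (p.1 < n) && (p.2 < m) && ~~ ((m - 1 - p.2 < i) && (n <= p.1 + nth 0 nu (m - 1 - p.2)))
  || (p.1 < i) && (m <= p.2 < m + nth 0 nu p.1).

Lemma star_stageS m n nu i : star_stage m n nu i.+1 =
  add_row_end (del_col_bottom (star_stage m n nu i) (m - 1 - i) (nth 0 nu i)) i (nth 0 nu i).
Proof. by rewrite /star_stage -[i.+1]addn1 iotaD foldl_cat. Qed.

Lemma star_stage0 m n nu :
  uniq (star_stage m n nu 0) /\ forall p, (p \in star_stage m n nu 0) = star_cell m n nu 0 p.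
Proof.
split => [|[r c]]; first exact: uniq_iota_pairs.
by rewrite mem_iota_pairs /star_cell /= andbT orbF.
Qed.

(* Row [r] keeps the columns whose deleted bottom segment misses it and gains
   [nu_r] cells. *)
Definition star_row (m n : nat) (nu : seq nat) (r : nat) : nat :=
  m - count (fun x => n <= r + x) nu + nth 0 nu r.

Section StarDiagram.

Variables (m n : nat) (nu : seq nat).
Hypotheses (n_gt0 : 0 < n) (nu_part : is_partition_of n.-1 nu) (size_nu : size nu <= m).

Let nu_sorted : sorted geq nu. Proof. by case/and3P: nu_part. Qed.
Let head_size : nth 0 nu 0 + size nu <= n := partition_head_size n_gt0 nu_part.
Let nth_le_head j : nth 0 nu j <= nth 0 nu 0 := nth_partition_homo nu_sorted (leq0n j).

Lemma del_col_bottom_stage i D : i < size nu -> uniq D ->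
  (forall p, (p \in D) = star_cell m n nu i p) ->
  forall p, (p \in del_col_bottom D (m - 1 - i) (nth 0 nu i)) =
    star_cell m n nu i p && ~~ ((p.2 == m - 1 - i) && (n - nth 0 nu i <= p.1 < n)).
Proof.
move=> i_lt uD DE p; set c0 := m - 1 - i.
set X := [seq q.1 | q <- D & q.2 == c0].
have uX : uniq X.
  rewrite map_inj_in_uniq ?filter_uniq // => -[a b] [a' b']; rewrite !mem_filter /=.
  by move=> /andP [/eqP -> _] /andP [/eqP -> _] ->.
have XE : X =i iota 0 n.
  move=> r; rewrite mem_iota add0n /=; apply/mapP/idP => [[[a b]]|rn].
    rewrite mem_filter /= DE /star_cell /= => /andP [/eqP -> H] ->; move: H; rewrite /c0; lia.
  exists (r, c0) => //; rewrite mem_filter /= eqxx DE /star_cell /= /c0.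
  have -> : m - 1 - (m - 1 - i) = i by lia.
  have := nth_le_head i; lia.
have gone r : (r \in take (nth 0 nu i) (sort geq X)) = (n - nth 0 nu i <= r < n).
  rewrite (sort_geq_iota uX XE) take_rev size_iota drop_iota mem_rev mem_iota; lia.
by rewrite /del_col_bottom mem_filter -/X gone DE andbC.
Qed.

Lemma star_stage_step i : i < size nu ->
  uniq (star_stage m n nu i) -> (forall p, (p \in star_stage m n nu i) = star_cell m n nu i p) ->
  uniq (star_stage m n nu i.+1) /\
  forall p, (p \in star_stage m n nu i.+1) = star_cell m n nu i.+1 p.
Proof.
move=> i_lt uD DE; rewrite star_stageS.
have D'E := del_col_bottom_stage i_lt uD DE.
set D' := del_col_bottom _ _ _ in D'E *; set vi := nth 0 nu i in D'E *.
have shifted_lt j : i + nth 0 nu j < n by have := nth_le_head j; lia.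
have rowi : row_len D' i = m.
  rewrite /row_len (@count_eq_size _ _ [seq (i, x) | x <- iota 0 m]) ?size_map ?size_iota //.
  - exact: filter_uniq.
  - by rewrite map_inj_uniq ?iota_uniq // => a b [].
  case=> r c; rewrite D'E mem_map_pair mem_iota /star_cell /=.
  case: (eqVneq r i) => [->|_]; last by rewrite andbF.
  by have := shifted_lt (m - 1 - c); have := shifted_lt i; rewrite -/vi; lia.
have new_cells r c : ((r, c) \in [seq (i, m + t) | t <- iota 0 vi]) = (r == i) && (m <= c < m + vi).
  apply/mapP/idP => [[t] | /andP [/eqP -> cm]].
    by rewrite mem_iota => ti [-> ->]; rewrite eqxx /=; lia.
  by exists (c - m); [rewrite mem_iota; lia | congr (_, _); lia].
rewrite /add_row_end rowi; split.
  rewrite cat_uniq filter_uniq //=; apply/andP; split.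
    by apply/hasP => -[p /mapP [t _ ->]]; rewrite D'E /star_cell /=; lia.
  by rewrite map_inj_uniq ?iota_uniq // => a b [] /eqP; rewrite eqn_add2l => /eqP.
case=> r c; rewrite mem_cat D'E new_cells /star_cell /=.
case: (eqVneq c (m - 1 - i)) => [->|c_neq].
  have -> : m - 1 - (m - 1 - i) = i by lia.
  by rewrite -/vi; lia.
by case: (eqVneq r i) => [->|r_neq]; rewrite -/vi; lia.
Qed.

Lemma star_stage_cells i : i <= size nu ->
  uniq (star_stage m n nu i) /\
  forall p, (p \in star_stage m n nu i) = star_cell m n nu i p.
Proof.
elim: i => [|i IH] i_le; first exact: star_stage0.
by have [uD DE] := IH (ltnW i_le); apply: star_stage_step.
Qed.

Lemma row_len_star_diagram r : r < n -> row_len (star_diagram m n nu) r = star_row m n nu r.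
Proof.
move=> r_lt; have [uD DE] := star_stage_cells (leqnn (size nu)).
change (star_diagram m n nu) with (star_stage m n nu (size nu)).
pose kept c := ~~ ((m - 1 - c < size nu) && (n <= r + nth 0 nu (m - 1 - c))).
have nth_out : size nu <= r -> nth 0 nu r = 0 by move=> ?; rewrite nth_default.
rewrite /row_len (@count_eq_size _ _ ([seq (r, c) | c <- iota 0 m & kept c] ++
                                      [seq (r, c) | c <- iota m (nth 0 nu r)])) //.
- rewrite size_cat !size_map size_filter size_iota /star_row; congr (_ + _).
  have := count_predC kept (iota 0 m); rewrite size_iota.
  have -> : count (predC kept) (iota 0 m) = count (fun x => n <= r + x) nu.
    rewrite -(count_nth_iota (fun x => n <= r + x) size_nu) -count_rev rev_iota0 count_map.
    apply: eq_in_count => c; rewrite mem_iota /= /kept negbK => c_lt.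
    by have -> : m - 1 - (m - 1 - c) = c by lia.
  by move=> E; rewrite -[in RHS]E addnK.
- rewrite cat_uniq !map_inj_uniq ?filter_uniq ?iota_uniq //=; try by move=> a b [].
  rewrite andbT; apply/hasP => -[p /mapP [c]]; rewrite mem_iota => c_in -> /mapP [c'].
  by rewrite mem_filter mem_iota => /and3P [_ _ c'_lt] [] e; move: c_in c'_lt; rewrite e; lia.
case=> r' c; rewrite DE /star_cell mem_cat !mem_map_pair mem_filter !mem_iota /= /kept.
case: (eqVneq r' r) => [->|_]; last by rewrite !andbF.
by move: nth_out; lia.
Qed.

Lemma starE : star m n nu = [seq star_row m n nu r | r <- iota 0 n].
Proof. by apply/eq_in_map => r; rewrite mem_iota => /andP [_ /row_len_star_diagram]. Qed.

Lemma star_row_lt r : r < size nu -> star_row m n nu r = m + nth 0 nu r.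
Proof.
move=> r_lt; rewrite /star_row; have -> : count (fun x => n <= r + x) nu = 0.
  apply/eqP; rewrite -leqn0 leqNgt -has_count; apply/hasP => -[y ynu].
  by have := partition_part_le_head nu_sorted ynu; lia.
by rewrite subn0.
Qed.

Lemma star_row_ge r : size nu <= r -> star_row m n nu r = m - count (fun x => n <= r + x) nu.
Proof. by move=> r_ge; rewrite /star_row nth_default // addn0. Qed.

Lemma largest_part_star : largest_part (star m n nu) = m + nth 0 nu 0.
Proof.
rewrite starE /largest_part big_map; apply/eqP; rewrite eqn_leq; apply/andP; split.
  by apply/bigmax_leqP_seq => r _ _; rewrite /star_row; have := nth_le_head r; lia.
have row0 : star_row m n nu 0 = m + nth 0 nu 0.
  case: (posnP (size nu)) => [/size0nil nu0 | ]; last exact: star_row_lt.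
  by rewrite /star_row nu0 /=; lia.
by rewrite -row0; apply: (leq_bigmax_seq (F := star_row m n nu)); rewrite ?mem_iota.
Qed.

Lemma conj_part_star_low i : 1 <= i <= m ->
  conj_part (star m n nu) i = n - nth 0 nu (m - i).
Proof.
move=> i_in; rewrite starE /conj_part count_map.
rewrite -(@count_ltn_iota (n - nth 0 nu (m - i)) n) ?leq_subr //.
apply: eq_in_count => r; rewrite mem_iota /= => r_lt.
have := nth_le_head (m - i); case: (ltnP r (size nu)) => r_size.
  by rewrite star_row_lt //; lia.
rewrite star_row_ge //; have := count_size (fun x => n <= r + x) nu.
have mono x y : x <= y -> n <= r + x -> n <= r + y by lia.
have nP0 : ~~ (n <= r + 0) by lia.
by have := sorted_count_leq nu_sorted mono nP0 (m - i); lia.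
Qed.

Lemma conj_part_star_high t : conj_part (star m n nu) (m.+1 + t) = conj_part nu t.+1.
Proof.
rewrite starE /conj_part count_map.
rewrite -(count_nth_iota (fun x => t < x) (_ : size nu <= n)); last lia.
apply: eq_in_count => r; rewrite mem_iota /= => r_lt.
by case: (ltnP r (size nu)) => r_size; [rewrite star_row_lt | rewrite star_row_ge]; lia.
Qed.

End StarDiagram.

(** * The family of type (m^n) * nu *)

Lemma card_fset_seq (T : choiceType) (A : {fset T}) (s : seq T) :
  uniq s -> A =i s -> #|` A|%fset = size s.
Proof.
move=> us As; have -> : A = [fset x in s]%fset by apply/fsetP => x; rewrite As inE.
by rewrite card_fseq undup_id.
Qed.

Lemma card_fset_sep (T : choiceType) (A : {fset T}) (s : seq T) (P : pred T) :
  uniq s -> A =i s -> #|` [fset x in A | P x]%fset| = count P s.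
Proof.
move=> us As; rewrite -size_filter; apply: card_fset_seq; first exact: filter_uniq.
by move=> x; rewrite !inE As mem_filter andbC.
Qed.

Lemma count_mem_le_card (A : {fset nat}) (X : seq nat) :
  uniq X -> count (fun x => x \in A) X <= #|` A|%fset.
Proof.
move=> uX; rewrite -size_filter; apply: uniq_leq_size; first exact: filter_uniq.
by move=> x; rewrite mem_filter => /andP [].
Qed.

Definition base_set (m : nat) : {fset nat} := [fset x in iota 1 m]%fset.

Definition exchange_set (m j t : nat) : {fset nat} :=
  ((m.+1 + t)%N |` (base_set m `\ (m - j)%N))%fset.

Lemma mem_base_set m x : (x \in base_set m) = (1 <= x <= m).
Proof. by rewrite inE mem_iota; lia. Qed.

Lemma mem_exchange_set m j t x :
  (x \in exchange_set m j t) = (x == m.+1 + t) || (x != m - j) && (1 <= x <= m).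
Proof. by rewrite in_fset1U in_fsetD1 mem_base_set. Qed.

Lemma card_base_set m : #|` base_set m|%fset = m.
Proof.
rewrite (@card_fset_seq _ _ (iota 1 m)) ?size_iota ?iota_uniq // => x.
by rewrite mem_base_set mem_iota; lia.
Qed.

Lemma card_exchange_set m j t : j < m -> #|` exchange_set m j t|%fset = m.
Proof.
move=> j_lt; rewrite cardfsU1 in_fsetD1 mem_base_set.
have := cardfsD1 (m - j)%N (base_set m); rewrite card_base_set mem_base_set.
have -> : 1 <= m - j <= m by lia.
have -> : m.+1 + t <= m = false by lia.
by rewrite andbF /=; lia.
Qed.

Lemma exchange_set_inj m j t j' t' : j < m -> j' < m ->
  exchange_set m j t = exchange_set m j' t' -> j = j' /\ t = t'.
Proof.
move=> j_lt j'_lt E.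
have := mem_exchange_set m j t (m - j); have := mem_exchange_set m j' t' (m - j).
have := mem_exchange_set m j t (m.+1 + t); have := mem_exchange_set m j' t' (m.+1 + t).
by rewrite E !eqxx /=; lia.
Qed.

Lemma exchange_set_neq_base m j t : j < m -> exchange_set m j t != base_set m.
Proof.
move=> j_lt; apply/eqP => E.
by have := mem_exchange_set m j t (m - j); rewrite E mem_base_set eqxx; lia.
Qed.

Definition ferrers_cells (m : nat) (nu : seq nat) : seq (nat * nat) :=
  [seq p <- [seq (j, t) | j <- iota 0 m, t <- iota 0 (nth 0 nu 0)] | p.2 < nth 0 nu p.1].

Definition star_family_seq (m : nat) (nu : seq nat) : seq {fset nat} :=
  base_set m :: [seq exchange_set m p.1 p.2 | p <- ferrers_cells m nu].

Definition star_family (m : nat) (nu : seq nat) : {fset {fset nat}} :=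
  [fset A in star_family_seq m nu]%fset.

Lemma uniq_ferrers_cells m nu : uniq (ferrers_cells m nu).
Proof. exact/filter_uniq/uniq_iota_pairs. Qed.

Section StarFamily.

Variable nu : seq nat.
Hypothesis nu_sorted : sorted geq nu.

Lemma mem_ferrers_cells m j t : ((j, t) \in ferrers_cells m nu) = (j < m) && (t < nth 0 nu j).
Proof.
rewrite mem_filter mem_iota_pairs /=.
by have := nth_partition_homo nu_sorted (leq0n j); lia.
Qed.

Lemma size_ferrers_cells m : size nu <= m -> size (ferrers_cells m nu) = sumn nu.
Proof.
move=> size_nu; rewrite size_filter count_allpairs -(sum_nth_iota size_nu).
apply: eq_big_seq => j _ /=; apply: count_ltn_iota; exact: nth_partition_homo.
Qed.

Lemma uniq_star_family_seq m : uniq (star_family_seq m nu).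
Proof.
rewrite /= map_inj_in_uniq ?uniq_ferrers_cells ?andbT.
  apply/mapP => -[[j t]]; rewrite mem_ferrers_cells => /andP [j_lt _] /= E.
  by move/eqP: (exchange_set_neq_base t j_lt); rewrite E.
move=> [j t] [j' t']; rewrite !mem_ferrers_cells => /andP [j_lt _] /andP [j'_lt _] /= E.
by have [-> ->] := exchange_set_inj j_lt j'_lt E.
Qed.

Lemma count_star_family_seq m x :
  count (fun A => x \in A) (star_family_seq m nu) =
  (x \in base_set m) + \sum_(j <- iota 0 m)
     count (fun t => (x \in exchange_set m j t) && (t < nth 0 nu j)) (iota 0 (nth 0 nu 0)).
Proof. by rewrite /= count_map count_filter count_allpairs. Qed.

End StarFamily.

Section StarFamilyType.

Variables (m n : nat) (nu : seq nat).
Hypotheses (n_gt0 : 0 < n) (nu_part : is_partition_of n.-1 nu) (size_nu : size nu <= m).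

Let nu_sorted : sorted geq nu. Proof. by case/and3P: nu_part. Qed.
Let sum_nu : sumn nu = n.-1. Proof. by case/and3P: nu_part => _ _ /eqP. Qed.

Lemma count_star_family_low i : 1 <= i <= m ->
  count (fun A => i \in A) (star_family_seq m nu) = n - nth 0 nu (m - i).
Proof.
move=> i_in; rewrite count_star_family_seq // mem_base_set i_in.
have -> : \sum_(j <- iota 0 m)
      count (fun t => (i \in exchange_set m j t) && (t < nth 0 nu j)) (iota 0 (nth 0 nu 0))
    = \sum_(j <- iota 0 m) (if j != m - i then nth 0 nu j else 0).
  apply: eq_big_seq => j; rewrite mem_iota => j_lt.
  have memi t : (i \in exchange_set m j t) = (j != m - i) by rewrite mem_exchange_set; lia.
  under eq_count => t do rewrite memi.
  case: (j != m - i); last by rewrite count_pred0.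
  by apply: count_ltn_iota; apply: nth_partition_homo.
have mi_in : m - i \in iota 0 m by rewrite mem_iota; lia.
have : \sum_(j <- iota 0 m) nth 0 nu j =
    nth 0 nu (m - i) + \sum_(j <- iota 0 m | j != m - i) nth 0 nu j.
  exact: bigD1_seq mi_in (iota_uniq 0 m).
by rewrite -big_mkcond sum_nth_iota // sum_nu /=; lia.
Qed.

Lemma count_star_family_high t : t < nth 0 nu 0 ->
  count (fun A => (m.+1 + t)%N \in A) (star_family_seq m nu) = conj_part nu t.+1.
Proof.
move=> t_lt; rewrite count_star_family_seq // mem_base_set.
have -> : (1 <= m.+1 + t <= m) = false by lia.
rewrite add0n /conj_part -(count_nth_iota _ size_nu) count_sum.
apply: eq_bigr => j _.
have memt t' : ((m.+1 + t)%N \in exchange_set m j t') && (t' < nth 0 nu j) =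
               (t' == t) && (t < nth 0 nu j).
  rewrite mem_exchange_set; case: (eqVneq t' t) => [-> | ne] /=; first by rewrite eqxx.
  by apply/negbTE; lia.
under eq_count => t' do rewrite memt.
case: (ltnP j (size nu)) => j_size /=; last first.
  by rewrite nth_default // (eq_count (a2 := pred0)) ?count_pred0 // => t'; rewrite andbF.
case: (t < nth 0 nu j).
  rewrite (eq_count (a2 := pred1 t)) => [|t']; last by rewrite andbT.
  by rewrite count_uniq_mem ?iota_uniq // mem_iota t_lt.
by rewrite (eq_count (a2 := pred0)) ?count_pred0 // => t'; rewrite andbF.
Qed.

Lemma star_family_shape : family_of_shape m n (star_family m nu).
Proof.
split.
  rewrite (@card_fset_seq _ _ (star_family_seq m nu)) ?uniq_star_family_seq // => [|A].
    by rewrite /= size_map size_ferrers_cells // sum_nu; lia.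
  by rewrite in_fset.
move=> A; rewrite in_fset inE => /orP [/eqP -> | /mapP [[j t]]]; first exact: card_base_set.
by rewrite mem_ferrers_cells // => /andP [j_lt _] ->; apply: card_exchange_set.
Qed.

Lemma star_family_type : has_type (star_family m nu) (star m n nu).
Proof.
move=> i; rewrite largest_part_star // => i_in.
rewrite (@card_fset_sep _ _ (star_family_seq m nu)) ?uniq_star_family_seq // => [|A]; last first.
  by rewrite in_fset.
case: (leqP i m) => i_le.
  by rewrite count_star_family_low ?conj_part_star_low //; lia.
have -> : i = (m.+1 + (i - m.+1))%N by lia.
by rewrite count_star_family_high ?conj_part_star_high //; lia.
Qed.

End StarFamilyType.

(** * Uniqueness *)

Section Uniqueness.

Variables (m n : nat) (nu : seq nat) (F : {fset {fset nat}}).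
Hypotheses (n_gt0 : 0 < n) (nu_part : is_partition_of n.-1 nu) (size_nu : size nu <= m).
Hypotheses (F_shape : family_of_shape m n F) (F_type : has_type F (star m n nu)).

Let nu_sorted : sorted geq nu. Proof. by case/and3P: nu_part. Qed.
Let sum_nu : sumn nu = n.-1. Proof. by case/and3P: nu_part => _ _ /eqP. Qed.
Let head_size : nth 0 nu 0 + size nu <= n := partition_head_size n_gt0 nu_part.
Let size_F : size F = n. Proof. by case: F_shape. Qed.
Let card_F A : A \in F -> #|` A|%fset = m. Proof. by case: F_shape => _; apply. Qed.
Let uniq_F : uniq F := fset_uniq F.

Let v := nth 0 nu 0.
Let low := [seq (m - j)%N | j <- iota 0 m].
Let high := [seq (m.+1 + t)%N | t <- iota 0 v].
Let hits (X : seq nat) (A : {fset nat}) := count (fun x => x \in A) X.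

Let mem_low x : (x \in low) = (1 <= x <= m).
Proof.
apply/mapP/idP => [[j] | x_in]; first by rewrite mem_iota => j_in ->; lia.
by exists (m - x)%N; rewrite ?mem_iota; lia.
Qed.

Let mem_high x : (x \in high) = (m < x <= m + v).
Proof.
apply/mapP/idP => [[t] | x_in]; first by rewrite mem_iota => t_in ->; lia.
by exists (x - m.+1)%N; rewrite ?mem_iota; lia.
Qed.

Let uniq_high : uniq high.
Proof. by rewrite map_inj_uniq ?iota_uniq // => a b /eqP; rewrite eqn_add2l => /eqP. Qed.

Let uniq_window : uniq (low ++ high).
Proof.
rewrite cat_uniq uniq_high andbT map_inj_in_uniq ?iota_uniq /= => [|a b]; last first.
  by rewrite !mem_iota; lia.
by apply/hasP => -[x]; rewrite mem_high mem_low; lia.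
Qed.

Lemma family_count_low j : j < m -> count (fun A => (m - j)%N \in A) F = n - nth 0 nu j.
Proof.
move=> j_lt; have := @F_type (m - j); rewrite largest_part_star //.
rewrite (@card_fset_sep _ _ F) // conj_part_star_low //; try lia.
have -> : (m - (m - j) = j)%N by lia.
by apply; lia.
Qed.

Lemma family_count_high t : t < v -> count (fun A => (m.+1 + t)%N \in A) F = conj_part nu t.+1.
Proof.
move=> t_lt; have := @F_type (m.+1 + t); rewrite largest_part_star //.
by rewrite (@card_fset_sep _ _ F) // conj_part_star_high //; apply; rewrite -/v; lia.
Qed.

Lemma sum_family_hits_low : \sum_(A <- F) hits low A + n.-1 = m * n.
Proof.
rewrite /hits (sum_count_exchange (fun (A : {fset nat}) x => x \in A)) big_map.
rewrite (eq_big_seq (fun j => n - nth 0 nu j)) => [|j]; last first.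
  by rewrite mem_iota => /andP [_ /family_count_low].
rewrite -sum_nu -(sum_nth_iota size_nu) -big_split /=.
rewrite (eq_bigr (fun _ => n)) => [|j _]; last first.
  by rewrite subnK //; have := nth_partition_homo nu_sorted (leq0n j); rewrite -/v; lia.
by rewrite big_const_seq count_predT size_iota iter_addn_0 mulnC.
Qed.

Lemma sum_family_hits_high : \sum_(A <- F) hits high A = n.-1.
Proof.
rewrite /hits (sum_count_exchange (fun (A : {fset nat}) x => x \in A)) big_map.
rewrite (eq_big_seq (fun t => conj_part nu t.+1)) ?sum_conj_part // => t.
by rewrite mem_iota => /andP [_ /family_count_high].
Qed.

Lemma family_hits_window A : A \in F -> hits low A + hits high A = m.
Proof.
apply: (@leq_sum_eq _ (fun B => hits low B + hits high B) (fun=> m)) => [B B_in | ].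
  by rewrite /hits -count_cat -(card_F B_in); apply: count_mem_le_card.
rewrite big_split /= sum_family_hits_high big_const_seq count_predT size_F iter_addn_0.
exact: sum_family_hits_low.
Qed.

Lemma family_sub_window A x : A \in F -> x \in A -> x \in low ++ high.
Proof.
move=> A_in xA.
have sub : {subset [seq y <- low ++ high | y \in A] <= enum_fset A}.
  by move=> y; rewrite mem_filter => /andP [].
have size_le : size (enum_fset A) <= size [seq y <- low ++ high | y \in A].
  by rewrite size_filter count_cat family_hits_window // card_F.
have [_ E] := uniq_min_size (filter_uniq _ uniq_window) sub size_le.
by move: xA; rewrite -[x \in A]/(x \in enum_fset A) -E mem_filter => /andP [].
Qed.

Lemma family_hits_high0 A : A \in F -> hits high A = 0 -> A = base_set m.
Proof.
move=> A_in hits0; apply/eqP; rewrite eqEfcard card_base_set card_F // leqnn andbT.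
apply/fsubsetP => x xA; rewrite mem_base_set -mem_low.
have := family_sub_window A_in xA; rewrite mem_cat => /orP [// | x_high].
by move/eqP: hits0; rewrite -leqn0 leqNgt -has_count; case/negP; apply/hasP; exists x.
Qed.

(* At most one set misses [high] entirely, while the [n] sets meet [high]
   [n - 1] times in total. *)
Lemma family_hits_high_le1 A : A \in F -> hits high A <= 1.
Proof.
have miss_le1 : count (fun B => hits high B == 0) F <= 1.
  rewrite -size_filter (@uniq_leq_size _ _ [:: base_set m]) ?filter_uniq // => B.
  by rewrite mem_filter inE => /andP [/eqP /[swap] /family_hits_high0 /[apply] ->].
have : \sum_(B <- F) (hits high B - 1) == 0.
  have split_sum : \sum_(B <- F) hits high B =
      count (predC (fun B => hits high B == 0)) F + \sum_(B <- F) (hits high B - 1).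
    by rewrite count_sum -big_split /=; apply: eq_bigr => B _; lia.
  have := count_predC (fun B => hits high B == 0) F.
  by move: split_sum miss_le1; rewrite sum_family_hits_high size_F; lia.
by rewrite sum_nat_seq_eq0 => /allP all0 A_in; have /= := all0 A A_in; lia.
Qed.

Lemma family_set_cases A : A \in F ->
  A = base_set m \/ exists j t, [/\ j < m, t < v & A = exchange_set m j t].
Proof.
move=> A_in; case: (posnP (hits high A)) => [/(family_hits_high0 A_in) -> | hits_pos].
  by left.
right; have hit1 := family_hits_high_le1 A_in.
move: (hits_pos); rewrite -has_count => /hasP [e /mapP [t]]; rewrite mem_iota /= => t_lt -> tA.
have : 0 < count (predC (fun x => x \in A)) low.
  have := family_hits_window A_in; have := count_predC (fun x => x \in A) low.
  by rewrite size_map size_iota /hits in hits_pos *; lia.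
rewrite -has_count => /hasP [c /mapP [j]]; rewrite mem_iota /= => j_lt -> jA.
exists j, t; split => //; apply/eqP.
rewrite eqEfcard card_exchange_set // card_F // leqnn andbT.
apply/fsubsetP => x xA; rewrite mem_exchange_set.
have := family_sub_window A_in xA; rewrite mem_cat mem_low.
case: (boolP (1 <= x <= m)) => /= [x_low _ | _ x_high].
  by rewrite andbT; apply/orP; right; apply/eqP => ex; move: jA; rewrite -ex xA.
apply/orP; left; apply/eqP.
by apply: (uniq_count_le1_eq uniq_high hit1 x_high) => //; rewrite mem_high; lia.
Qed.

Let cells := [seq p <- [seq (j, t) | j <- iota 0 m, t <- iota 0 v] | exchange_set m p.1 p.2 \in F].

Let uniq_cells : uniq cells.
Proof. exact/filter_uniq/uniq_iota_pairs. Qed.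

Let mem_cells j t : ((j, t) \in cells) = [&& j < m, t < v & exchange_set m j t \in F].
Proof. by rewrite mem_filter mem_iota_pairs /= andbC andbA. Qed.

Let uniq_exchange_cells (Q : pred (nat * nat)) :
  uniq [seq exchange_set m p.1 p.2 | p <- [seq p <- cells | Q p]].
Proof.
rewrite map_inj_in_uniq; first exact: filter_uniq.
move=> [j t] [j' t'] /(mem_subseq (filter_subseq _ _)) + /(mem_subseq (filter_subseq _ _)).
by rewrite !mem_cells => /andP [j_lt _] /andP [j'_lt _] /= /(exchange_set_inj j_lt j'_lt) [-> ->].
Qed.

Lemma family_cells_rows j : count (fun p => p.1 == j) cells = nth 0 nu j.
Proof.
case: (ltnP j m) => j_lt; last first.
  rewrite nth_default; last lia.
  apply/eqP; rewrite -leqn0 leqNgt -has_count; apply/hasP => -[[j' t]].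
  by rewrite mem_cells /= => /andP [j'_lt _] /eqP ej; lia.
have missing : count (predC (fun A => (m - j)%N \in A)) F =
    size [seq exchange_set m p.1 p.2 | p <- [seq p <- cells | p.1 == j]].
  apply: (@count_eq_size _ (enum_fset F)) => // A; apply/andP/mapP => [[A_in nA] | [[j' t]]].
    case: (family_set_cases A_in) => [A_base | [j' [t [j'_lt t_lt A_ex]]]].
      by move: nA; rewrite /= A_base mem_base_set; lia.
    have ej : j' = j by move: nA; rewrite /= A_ex mem_exchange_set; lia.
    rewrite {}ej in A_ex; exists (j, t) => //.
    by rewrite mem_filter eqxx mem_cells j_lt t_lt -A_ex A_in.
  rewrite mem_filter mem_cells /= => /andP [/eqP -> /and3P [_ _ ex_in]] ->.
  by split => //=; rewrite mem_exchange_set; lia.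
rewrite -size_filter -(size_map (fun p : nat * nat => exchange_set m p.1 p.2)) -missing.
have := count_predC (fun A => (m - j)%N \in A) F.
rewrite size_F family_count_low //; have := nth_partition_homo nu_sorted (leq0n j).
by rewrite -/v; lia.
Qed.

Lemma family_cells_cols t : count (fun p => p.2 == t) cells = conj_part nu t.+1.
Proof.
case: (ltnP t v) => t_lt; last first.
  have -> : conj_part nu t.+1 = 0.
    apply/eqP; rewrite -leqn0 leqNgt -has_count; apply/hasP => -[x x_in].
    by have := partition_part_le_head nu_sorted x_in; rewrite -/v; lia.
  apply/eqP; rewrite -leqn0 leqNgt -has_count; apply/hasP => -[[j t']].
  by rewrite mem_cells /= => /and3P [_ t'_lt _] /eqP et; lia.
rewrite -family_count_high //.
have -> : count (fun A => (m.+1 + t)%N \in A) F =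
    size [seq exchange_set m p.1 p.2 | p <- [seq p <- cells | p.2 == t]].
  apply: (@count_eq_size _ (enum_fset F)) => // A; apply/andP/mapP => [[A_in tA] | [[j t']]].
    case: (family_set_cases A_in) => [A_base | [j [t' [j_lt t'_lt A_ex]]]].
      by move: tA; rewrite A_base mem_base_set; lia.
    have et : t' = t by move: tA; rewrite A_ex mem_exchange_set; lia.
    rewrite {}et in A_ex; exists (j, t) => //.
    by rewrite mem_filter eqxx mem_cells j_lt t_lt -A_ex A_in.
  rewrite mem_filter mem_cells /= => /andP [/eqP -> /and3P [_ _ ex_in]] ->.
  by rewrite mem_exchange_set eqxx.
by rewrite size_map size_filter.
Qed.

Lemma family_eq_star_family : F = star_family m nu.
Proof.
have cellsE := ferrers_unique nu_sorted uniq_cells family_cells_rows family_cells_cols.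
apply/eqP; rewrite eqEfcard; apply/andP; split; last first.
  by case: (star_family_shape n_gt0 nu_part size_nu) => -> _; rewrite size_F.
apply/fsubsetP => A A_in; rewrite in_fset inE.
case: (family_set_cases A_in) => [-> | [j [t [j_lt t_lt A_ex]]]]; first by rewrite eqxx.
have : (j, t) \in cells by rewrite mem_cells j_lt t_lt -A_ex A_in.
rewrite cellsE => t_lt_j; apply/orP; right; apply/mapP; exists (j, t) => //.
by rewrite mem_ferrers_cells // j_lt.
Qed.

End Uniqueness.

Local Open Scope fset_scope.

Theorem proposition5p2 (m n : nat) (nu : seq nat) :
  0 < n -> is_partition_of n.-1 nu -> size nu <= m ->
  exists! F : {fset {fset nat}}, family_of_shape m n F /\ has_type F (star m n nu).
Proof.
move=> n_gt0 nu_part size_nu; exists (star_family m nu); split.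
  by split; [apply: star_family_shape | apply: star_family_type].
by move=> F [F_shape F_type]; rewrite (family_eq_star_family n_gt0 nu_part size_nu F_shape F_type).
Qed.
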